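(* Let $G$ be a torsion-free group acting $\kappa$-acylindrically on a simplicial tree $T$. Let $g,h\in G$ be loxodromic with axes $\alpha_g,\alpha_h$ and translation lengths $\lambda_T(g),\lambda_T(h)$. If $g$ and $h$ do not have a common nontrivial power, then $\mathrm{diam}_T(\alpha_g\cap\alpha_h)\le\kappa+\lambda_T(g)\cdot\lambda_T(h)$.
   Context: An action on a simplicial tree is $\kappa$-acylindrical if the pointwise stabiliser of every edge path of length at least $\kappa+1$ is trivial. For a loxodromic element $g$, its axis $\alpha_g$ is the unique $g$-invariant bi-infinite geodesic on which $g$ translates, and $\lambda_T(g)>0$ is its translation length. Common nontrivial power: $g^m=h^n\neq1$ for some integers $m,n$. *)

From mathcomp Require Import all_boot all_order all_algebra.
Set Implicit Arguments. Unset Strict Implicit. Unset Printing Implicit Defensive.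
Import GRing.Theory Num.Theory.

Definition is_group (G : Type) (mul : G -> G -> G) (inv : G -> G) (one : G) : Prop :=
  [/\ (forall a b c, mul a (mul b c) = mul (mul a b) c),
      (forall a, mul one a = a), (forall a, mul a one = a),
      (forall a, mul (inv a) a = one) & (forall a, mul a (inv a) = one)].

Section GroupDefs.
Variables (G : Type) (mul : G -> G -> G) (inv : G -> G) (one : G).

Fixpoint gpow (g : G) (n : nat) : G :=
  match n with O => one | S n' => mul g (gpow g n') end.

Definition zpow (g : G) (z : int) : G :=
  match z with Posz n => gpow g n | Negz n => inv (gpow g n.+1) end.

Definition torsion_free : Prop :=
  forall (g : G) (n : nat), (0 < n)%N -> gpow g n = one -> g = one.

Definition common_nontrivial_power (g h : G) : Prop :=
  exists m n : int, zpow g m = zpow h n /\ zpow g m <> one.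
End GroupDefs.

Section Graphs.
Variables (V : Type) (adj : V -> V -> Prop).

(* x :: s is a walk (edge path) starting at x; its length is size s *)
Fixpoint is_walk (x : V) (s : seq V) : Prop :=
  match s with [::] => True | y :: s' => adj x y /\ is_walk y s' end.

Definition reduced (x : V) (s : seq V) : Prop :=
  forall i, (i.+2 <= size s)%N -> nth x (x :: s) i <> nth x (x :: s) i.+2.

Definition is_tree : Prop :=
  [/\ (forall x, ~ adj x x),
      (forall x y, adj x y -> adj y x),
      (forall x y, exists s, is_walk x s /\ last x s = y) &
      (forall x s, is_walk x s -> reduced x s -> last x s = x -> s = [::])].

Definition is_dist (x y : V) (n : nat) : Prop :=
  (exists s, [/\ is_walk x s, last x s = y & size s = n]) /\
  (forall s, is_walk x s -> last x s = y -> (n <= size s)%N).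

Definition biinf_geodesic (gam : int -> V) : Prop :=
  forall i j : int, is_dist (gam i) (gam j) `|(i - j)%R|%N.
End Graphs.

Section Actions.
Variables (G : Type) (mul : G -> G -> G) (one : G) (V : Type) (adj : V -> V -> Prop)
          (act : G -> V -> V).

Definition is_action : Prop :=
  [/\ (forall x, act one x = x),
      (forall g h x, act (mul g h) x = act g (act h x)) &
      (forall g x y, adj x y <-> adj (act g x) (act g y))].

Definition acylindrical (kappa : nat) : Prop :=
  forall (x : V) (s : seq V), is_walk adj x s -> reduced x s -> (kappa.+1 <= size s)%N ->
  forall g : G, (forall i, (i <= size s)%N -> act g (nth x (x :: s) i) = nth x (x :: s) i) ->
  g = one.

Definition translation_length (g : G) (l : nat) : Prop :=
  (exists x, is_dist adj x (act g x) l) /\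
  (forall x n, is_dist adj x (act g x) n -> (l <= n)%N).

Definition is_axis (g : G) (gam : int -> V) : Prop :=
  biinf_geodesic adj gam /\
  exists k : int, (k != 0)%R /\ forall i : int, act g (gam i) = gam (i + k)%R.

Definition loxodromic (g : G) : Prop := exists gam, is_axis g gam.
End Actions.

From mathcomp Require Import all_boot all_order all_algebra.
From mathcomp Require Import zify ring.
From Stdlib Require Import Classical.
Import GRing.Theory Num.Theory.
Set Implicit Arguments. Unset Strict Implicit. Unset Printing Implicit Defensive.

(* Let k and k' be the shifts of g and h along their axes, so that |k| <= lambda(g)
   and |k'| <= lambda(h). Geodesics in a tree are unique, so a segment of length n
   shared by the two axes is a common geodesic segment, and suitable powers
   A = g^(+-|k'|) and B = h^(+-|k|) both translate it by L = |k||k'| in the same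
   direction. Then B^-1 A fixes its initial subsegment of length n - L pointwise;
   if n > kappa + L, acylindricity gives A = B, and A <> 1 since A moves the
   points of its axis: a common nontrivial power. *)

Section Walks.
Variables (V : Type) (adj : V -> V -> Prop).

Definition has_walk (x y : V) (n : nat) :=
  exists s, [/\ is_walk adj x s, last x s = y & size s = n].

Lemma is_walk_cat x s t :
  is_walk adj x (s ++ t) <-> is_walk adj x s /\ is_walk adj (last x s) t.
Proof. elim: s x => [|y s IH] x /=; first by tauto. rewrite IH; tauto. Qed.

Lemma has_walk_cat x y z m n : has_walk x y m -> has_walk y z n -> has_walk x z (m + n).
Proof.
move=> [s [ws <- <-]] [t [wt <- <-]]; exists (s ++ t); split.
- exact/is_walk_cat.
- by rewrite last_cat.
- by rewrite size_cat.
Qed.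

Lemma is_dist_walk x y n : is_dist adj x y n -> has_walk x y n.
Proof. by case. Qed.

Lemma is_dist_le x y n m : is_dist adj x y n -> has_walk x y m -> (n <= m)%N.
Proof. by move=> [_ Hmin] [s [ws ls <-]]; apply: Hmin. Qed.

Lemma is_dist_uniq x y n m : is_dist adj x y n -> is_dist adj x y m -> n = m.
Proof.
move=> Hn Hm; apply/eqP.
by rewrite eqn_leq (is_dist_le Hn (is_dist_walk Hm)) (is_dist_le Hm (is_dist_walk Hn)).
Qed.

Lemma is_dist_refl x n : is_dist adj x x n -> n = 0%N.
Proof. by move=> Hn; apply/eqP; rewrite -leqn0; apply: (is_dist_le Hn); exists [::]. Qed.

Lemma is_dist1_adj x y : is_dist adj x y 1 -> adj x y.
Proof. by move=> /is_dist_walk [[|z [|? ?]] [//= [xz _] <- _]]. Qed.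

Definition fpath (c : nat -> V) (n : nat) : seq V := map c (iota 1 n).

Lemma size_fpath c n : size (fpath c n) = n.
Proof. by rewrite size_map size_iota. Qed.

Lemma fpathS c n : fpath c n.+1 = c 1%N :: fpath (fun t => c t.+1) n.
Proof. by rewrite /fpath /= -[2%N]/(1 + 1)%N iotaDl -map_comp. Qed.

Lemma nth_fpath c n t : (t <= n)%N -> nth (c 0%N) (c 0%N :: fpath c n) t = c t.
Proof.
move=> tn; rewrite -[c 0%N :: _]/(map c (iota 0 n.+1)).
by rewrite (nth_map 0%N) ?size_iota // nth_iota.
Qed.

Lemma last_fpath c n : last (c 0%N) (fpath c n) = c n.
Proof.
by rewrite -[last _ _]/(last (c 0%N) (c 0%N :: fpath c n)) -nth_last /= size_fpath nth_fpath.
Qed.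

Lemma is_walk_fpath c n :
  (forall t, (t < n)%N -> adj (c t) (c t.+1)) -> is_walk adj (c 0%N) (fpath c n).
Proof.
elim: n c => [|n IH] c Hc //; rewrite fpathS; split; first exact: Hc.
by apply: (IH (fun t => c t.+1)) => t ht; apply: Hc.
Qed.

Lemma reduced_fpath c n :
  (forall t, (t.+2 <= n)%N -> c t <> c t.+2) -> reduced (c 0%N) (fpath c n).
Proof.
move=> Hc t; rewrite size_fpath => ht.
rewrite !nth_fpath //; [exact: Hc | lia].
Qed.

Definition geodesic_segment (f : nat -> V) (n : nat) :=
  forall a b, (a <= b)%N -> (b <= n)%N -> is_dist adj (f a) (f b) (b - a).

Lemma geodesic_segment_le f n m : geodesic_segment f n -> (m <= n)%N -> geodesic_segment f m.
Proof. by move=> Hf mn a b ab bm; apply: Hf => //; apply: leq_trans mn. Qed.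

Lemma geodesic_segment_adj f n t : geodesic_segment f n -> (t < n)%N -> adj (f t) (f t.+1).
Proof. by move=> Hf tn; apply: is_dist1_adj; rewrite -(subSnn t); apply: Hf. Qed.

Lemma geodesic_segment_neq2 f n t : geodesic_segment f n -> (t.+2 <= n)%N -> f t <> f t.+2.
Proof.
move=> Hf tn E; have := Hf t t.+2 (leqW (leqnSn t)) tn.
by rewrite E => /is_dist_refl; rewrite subSn // subSnn.
Qed.

Lemma biinf_geodesic_inj gam : biinf_geodesic adj gam -> injective gam.
Proof. by move=> Hgam a b E; have := Hgam a b; rewrite E => /is_dist_refl; lia. Qed.

Lemma biinf_geodesic_segment gam (i e : int) n : biinf_geodesic adj gam ->
  (e = 1 \/ e = -1)%R -> geodesic_segment (fun t => gam (i + e * t%:Z)%R) n.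
Proof.
move=> Hgam He a b ab _; have := Hgam (i + e * a%:Z)%R (i + e * b%:Z)%R.
suff -> : `|(i + e * a%:Z - (i + e * b%:Z))%R|%N = (b - a)%N by [].
by case: He => ->; lia.
Qed.

End Walks.

Lemma int_orient_dist (i j : int) :
  exists2 e : int, (e = 1 \/ e = -1)%R & j = (i + e * `|(i - j)%R|%N%:Z)%R.
Proof.
have [ij|ji] := lerP i j; [exists 1%R; first by left | exists (-1)%R; first by right]; lia.
Qed.

Section Trees.
Variables (V : Type) (adj : V -> V -> Prop).
Hypothesis HT : is_tree adj.

Lemma tree_fpath_not_closed c N : (0 < N)%N ->
  (forall t, (t < N)%N -> adj (c t) (c t.+1)) ->
  (forall t, (t.+2 <= N)%N -> c t <> c t.+2) -> c N <> c 0%N.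
Proof.
move=> N0 Hadj Hred Hclosed; case: HT => _ _ _ Hcycle.
have := Hcycle _ _ (is_walk_fpath Hadj) (reduced_fpath Hred).
by rewrite last_fpath => /(_ Hclosed) /(congr1 size) /=; rewrite size_fpath; lia.
Qed.

Lemma geodesic_segment_uniq f f' n :
  geodesic_segment adj f n -> geodesic_segment adj f' n ->
  f 0%N = f' 0%N -> f n = f' n -> forall t, (t <= n)%N -> f t = f' t.
Proof.
elim: n f f' => [|m IH] f f' Hf Hf' E0 En t tn; first by have -> : t = 0%N by lia.
have [Em|Em] := classic (f m = f' m).
  have [mt|tm] := ltnP m t; first by have -> : t = m.+1 by lia.
  by apply: IH tm; rewrite ?Em //; apply: geodesic_segment_le (leqnSn m).
(* Otherwise f followed by f' backwards is a reduced closed walk. *)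
exfalso; case: HT => _ Hsym _ _.
pose n := m.+1; pose c t := if (t <= n)%N then f t else f' (n + n - t).
have c_le s : (s <= n)%N -> c s = f s by rewrite /c => ->.
have c_ge s : (n <= s)%N -> c s = f' (n + n - s).
  rewrite /c; case: (leqP s n) => // sn ns; have -> : s = n by lia.
  by rewrite -addnBA // subnn addn0.
apply: (tree_fpath_not_closed (c := c) (N := n + n)); first by lia.
- move=> s sN; have [sn|ns] := ltnP s n.
    by rewrite !c_le ?(ltnW sn) //; apply: geodesic_segment_adj Hf sn.
  rewrite !c_ge ?(leq_trans ns) //; apply: Hsym.
  rewrite (_ : n + n - s = (n + n - s.+1).+1)%N; last by lia.
  by apply: geodesic_segment_adj Hf' _; lia.
- move=> s sN; have [sn|ns] := leqP s.+2 n.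
    by rewrite !c_le //; [apply: geodesic_segment_neq2 Hf sn | lia].
  have [->|s_ge] : s = m \/ (n <= s)%N by lia.
    by rewrite c_le ?c_ge // (_ : n + n - m.+2 = m)%N //; lia.
  rewrite !c_ge; try lia.
  rewrite (_ : n + n - s = (n + n - s.+2).+2)%N; last by lia.
  by move/esym; apply: geodesic_segment_neq2 Hf' _; lia.
- by rewrite c_ge ?leq_addr // subnn c_le // E0.
Qed.

Lemma biinf_geodesics_common_segment ag ah i j i' j' n :
  biinf_geodesic adj ag -> biinf_geodesic adj ah -> ag i = ah i' -> ag j = ah j' ->
  is_dist adj (ag i) (ag j) n ->
  exists2 e : int, (e = 1 \/ e = -1)%R & exists2 e' : int, (e' = 1 \/ e' = -1)%R &
    forall t, (t <= n)%N -> ag (i + e * t%:Z)%R = ah (i' + e' * t%:Z)%R.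
Proof.
move=> Hag Hah Ei Ej Hn; have Hn' : is_dist adj (ah i') (ah j') n by rewrite -Ei -Ej.
have [e He Ej_e] := int_orient_dist i j; have [e' He' Ej_e'] := int_orient_dist i' j'.
rewrite -(is_dist_uniq Hn (Hag i j)) in Ej_e.
rewrite -(is_dist_uniq Hn' (Hah i' j')) in Ej_e'.
exists e => //; exists e' => // t.
apply: (geodesic_segment_uniq (biinf_geodesic_segment i (n := n) Hag He)
                              (biinf_geodesic_segment i' (n := n) Hah He')) => /=.
  by rewrite !mulr0 !addr0.
by rewrite -Ej_e -Ej_e'.
Qed.

End Trees.

Section Actions.
Variables (G : Type) (mul : G -> G -> G) (inv : G -> G) (one : G).
Hypothesis HG : is_group mul inv one.
Variables (V : Type) (adj : V -> V -> Prop) (act : G -> V -> V).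
Hypothesis Hact : is_action mul one adj act.

Lemma act_invK a x : act (inv a) (act a x) = x.
Proof. by case: HG => _ _ _ mulVg _; case: Hact => act1 actM _; rewrite -actM mulVg act1. Qed.

Lemma has_walk_act a x y n : has_walk adj x y n -> has_walk adj (act a x) (act a y) n.
Proof.
case: Hact => _ _ act_adj [s [ws <- <-]]; exists (map (act a) s); split.
- elim: s x ws => [|z s IH] x //= [xz ws].
  by split; [apply: (act_adj a x z).1 | apply: IH].
- by rewrite last_map.
- by rewrite size_map.
Qed.

Section Shift.
Variables (g : G) (gam : int -> V) (k : int).
Hypothesis Hshift : forall i, act g (gam i) = gam (i + k)%R.

Lemma act_gpow_shift m i : act (gpow mul one g m) (gam i) = gam (i + m%:Z * k)%R.
Proof.
case: Hact => act1 actM _; elim: m i => [|m IH] i /=; first by rewrite act1 mul0r addr0.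
by rewrite actM IH Hshift intS; congr gam; ring.
Qed.

Lemma act_zpow_shift z i : act (zpow mul inv one g z) (gam i) = gam (i + z * k)%R.
Proof.
case: z => [m|m] /=; first exact: act_gpow_shift.
have -> : gam i = act (gpow mul one g m.+1) (gam (i + Negz m * k)%R).
  by rewrite act_gpow_shift NegzE; congr gam; ring.
by rewrite act_invK.
Qed.

Lemma axis_shift_le_translation_length l :
  (forall x y : V, exists s, is_walk adj x s /\ last x s = y) ->
  biinf_geodesic adj gam -> translation_length adj act g l -> (`|k| <= l)%N.
Proof.
move=> Hconn Hgam [[x Hx] _].
have [p [wp lp]] := Hconn (gam 0%R) x; have [q [wq lq]] := Hconn x (gam 0%R).
have Wp : has_walk adj (gam 0%R) x (size p) by exists p.
have Wq : has_walk adj x (gam 0%R) (size q) by exists q.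
have Wpow m : has_walk adj x (act (gpow mul one g m) x) (m * l).
  elim: m => [|m IH] /=; first by exists [::]; case: Hact => ->.
  case: Hact => _ actM _; rewrite mulSn actM.
  exact: has_walk_cat (is_dist_walk Hx) (has_walk_act g IH).
pose m := (size p + size q).+1.
have := has_walk_cat (has_walk_cat Wp (Wpow m)) (has_walk_act (gpow mul one g m) Wq).
rewrite act_gpow_shift add0r => /(is_dist_le (Hgam 0%R _)).
rewrite sub0r abszN abszM absz_nat /m; nia.
Qed.

Lemma axis_power_translate (i e : int) c : (e = 1 \/ e = -1)%R ->
  exists z, forall t : nat,
    act (zpow mul inv one g z) (gam (i + e * t%:Z)%R) = gam (i + e * (t + `|k| * c)%N%:Z)%R.
Proof.
move=> He; have [k_ge0|k_lt0] := lerP 0 k.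
- by exists (e * c%:Z)%R => t; rewrite act_zpow_shift; congr gam; case: He => ->; nia.
- by exists (- e * c%:Z)%R => t; rewrite act_zpow_shift; congr gam; case: He => ->; nia.
Qed.

End Shift.

Section Acylindrical.
Variable kappa : nat.
Hypothesis Hacyl : acylindrical one adj act kappa.

Lemma acylindrical_fix_geodesic_segment f m a :
  geodesic_segment adj f m -> (kappa < m)%N ->
  (forall t, (t <= m)%N -> act a (f t) = f t) -> a = one.
Proof.
move=> Hf km Hfix; apply: (Hacyl (s := fpath f m)); rewrite ?size_fpath //.
- by apply: is_walk_fpath => t; apply: geodesic_segment_adj Hf.
- by apply: reduced_fpath => t; apply: geodesic_segment_neq2 Hf.
- by move=> t tm; rewrite nth_fpath // Hfix.
Qed.

Lemma acylindrical_translations_eq f n L a b :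
  geodesic_segment adj f n -> (kappa + L < n)%N ->
  (forall t, (t + L <= n)%N -> act a (f t) = f (t + L)%N) ->
  (forall t, (t + L <= n)%N -> act b (f t) = f (t + L)%N) -> a = b.
Proof.
move=> Hf Hn Ha Hb; case: HG => mulA mul1g mulg1 _ mulgV.
have Hfix : mul (inv b) a = one.
  apply: (acylindrical_fix_geodesic_segment (geodesic_segment_le Hf (leq_subr L n))).
    by lia.
  case: Hact => _ actM _ t tn.
  by rewrite actM Ha -?Hb ?act_invK //; lia.
by rewrite -[a]mul1g -(mulgV b) -mulA Hfix mulg1.
Qed.

End Acylindrical.

End Actions.

Theorem lemma2p6
  (G : Type) (mul : G -> G -> G) (inv : G -> G) (one : G)
  (HG : is_group mul inv one) (Htf : torsion_free mul one)
  (V : Type) (adj : V -> V -> Prop) (HT : is_tree adj)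
  (act : G -> V -> V) (Hact : is_action mul one adj act)
  (kappa : nat) (Hacyl : acylindrical one adj act kappa)
  (g h : G) (ag ah : int -> V)
  (Hag : is_axis adj act g ag) (Hah : is_axis adj act h ah)
  (lg lh : nat)
  (Hlg : translation_length adj act g lg) (Hlh : translation_length adj act h lh)
  (Hnp : ~ common_nontrivial_power mul inv one g h) :
  forall (i j i' j' : int) (n : nat),
    ag i = ah i' -> ag j = ah j' ->
    is_dist adj (ag i) (ag j) n ->
    (n <= kappa + lg * lh)%N.
Proof.
move=> i j i' j' n Ei Ej Hn.
case: Hag => geo_g [k [k0 Hk]]; case: Hah => geo_h [k' [k'0 Hk']].
have Hconn : forall x y, exists s, is_walk adj x s /\ last x s = y by case: HT.
have kg := axis_shift_le_translation_length Hact Hk Hconn geo_g Hlg.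
have kh := axis_shift_le_translation_length Hact Hk' Hconn geo_h Hlh.
have [e He [e' He' Eff']] := biinf_geodesics_common_segment HT geo_g geo_h Ei Ej Hn.
pose f t := ag (i + e * t%:Z)%R.
have Hf : geodesic_segment adj f n by apply: biinf_geodesic_segment.
rewrite leqNgt; apply/negP => Hlt.
pose L := (`|k| * `|k'|)%N.
have [z Hz] := axis_power_translate HG Hact Hk i `|k'| He.
have [w Hw] := axis_power_translate HG Hact Hk' i' `|k| He'.
have Ezw : zpow mul inv one g z = zpow mul inv one h w.
  apply: (acylindrical_translations_eq HG Hact Hacyl Hf (L := L)).
  - by apply: leq_ltn_trans Hlt; rewrite leq_add2l leq_mul.
  - by move=> t _; apply: Hz.
  - move=> t tn; rewrite /f (Eff' t (leq_trans (leq_addr L t) tn)) Eff' //.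
    by rewrite Hw /L mulnC.
apply: Hnp; exists z, w; split=> // z_triv.
have := Hz 0%N; rewrite z_triv; case: Hact => -> _ _ /(biinf_geodesic_inj geo_g).
by case: He => ->; lia.
Qed.
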